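(* Let $T^1\subseteq T^2\subseteq T$, let $\mathbf{z}^1$ be an optimal solution of ODMTS-DFD$(T^1)$ and $\mathbf{z}^2$ an optimal solution of ODMTS-DFD$(T^2)$. Then $$\sum_{r\in T^2\setminus T^1}p^r\big(g^r(\mathbf{z}^2)-g^r(\mathbf{z}^1)\big)\le 0.$$
   Context: Let $N$ be a finite set of nodes and $H \subseteq N$ a set of hubs. An ODMTS design is a vector $\mathbf{z}=(z_{hl})_{h,l\in H}\in\{0,1\}^{H\times H}$ satisfying $\sum_{l\in H} z_{hl}=\sum_{l\in H} z_{lh}$ for all $h\in H$; opening arc $(h,l)$ costs $\beta_{hl}$. Let $T$ be a finite set of trips; trip $r$ has origin $or^r\in N$, destination $de^r\in N$, number of riders $p^r\ge 0$, and cost coefficients $\tau^r_{hl}$ ($h,l\in H$) and $\gamma^r_{ij}$ ($i,j\in N$); $t_{hl}, t^{wait}_{hl}$ are bus travel and waiting times and $t_{ij}$ shuttle travel times. Given a design $\mathbf{z}$, a route for $r$ is a pair of binary vectors $x^r\in\{0,1\}^{H\times H}$, $y^r\in\{0,1\}^{N\times N}$ with $x^r_{hl}\le z_{hl}$ and, for every $i\in N$, $\sum_{h\in H}(x^r_{ih}-x^r_{hi})\,[\text{if } i\in H] + \sum_{j\in N}(y^r_{ij}-y^r_{ji})$ equal to $1$ if $i=or^r$, $-1$ if $i=de^r$, and $0$ otherwise. Its cost is $g^r=\sum_{h,l}\tau^r_{hl}x^r_{hl}+\sum_{i,j}\gamma^r_{ij}y^r_{ij}$ and its travel time is $f^r=\sum_{h,l}(t_{hl}+t^{wait}_{hl})x^r_{hl}+\sum_{i,j}t_{ij}y^r_{ij}$.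 The route of $r$ under $\mathbf{z}$ is a route minimizing $(g^r,f^r)$ lexicographically; $g^r(\mathbf{z})$ denotes its cost (the optimum cost of trip $r$ under $\mathbf{z}$). For $\hat T\subseteq T$, ODMTS-DFD$(\hat T)$ is the problem of minimizing $\sum_{h,l\in H}\beta_{hl}z_{hl}+\sum_{r\in\hat T}p^r g^r(\mathbf{z})$ over designs $\mathbf{z}$. *)

From HB Require Import structures.
From mathcomp Require Import all_boot all_order all_algebra.
Set Implicit Arguments. Unset Strict Implicit. Unset Printing Implicit Defensive.
Import Order.TTheory GRing.Theory Num.Theory.
Local Open Scope ring_scope.

Definition hubT (N : finType) (H : {set N}) : finType := {x : N | x \in H}.

Unset Implicit Arguments.
Record odmts (R : realDomainType) (N T : finType) := Odmts {
  hubs : {set N};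
  beta : hubT hubs -> hubT hubs -> R;        (* arc opening cost *)
  orig : T -> N;
  dest : T -> N;
  riders : T -> R;
  tau : T -> hubT hubs -> hubT hubs -> R;
  gamma : T -> N -> N -> R;
  tbus : hubT hubs -> hubT hubs -> R;
  twait : hubT hubs -> hubT hubs -> R;
  tshut : N -> N -> R
}.
Arguments Odmts {R N T}.
Arguments hubs {R N T}. Arguments beta {R N T}. Arguments orig {R N T}.
Arguments dest {R N T}. Arguments riders {R N T}. Arguments tau {R N T}.
Arguments gamma {R N T}. Arguments tbus {R N T}. Arguments twait {R N T}.
Arguments tshut {R N T}.
Set Implicit Arguments.

Section ODMTS.
Context {R : realDomainType} {N T : finType} (I : odmts R N T).

Local Notation Hb := (hubT (hubs I)).

Definition designT := {ffun Hb * Hb -> bool}.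
Definition routeT := ({ffun Hb * Hb -> bool} * {ffun N * N -> bool})%type.

Definition is_design (z : designT) : Prop :=
  forall h : Hb, (\sum_(l : Hb) z (h, l) = \sum_(l : Hb) z (l, h))%N.

Definition balance (xy : routeT) (i : N) : int :=
  (match insub i : option Hb with
   | Some h => \sum_(l : Hb) ((xy.1 (h, l))%:Z - (xy.1 (l, h))%:Z)
   | None => 0
   end)
  + \sum_(j : N) ((xy.2 (i, j))%:Z - (xy.2 (j, i))%:Z).

Definition is_route (r : T) (z : designT) (xy : routeT) : bool :=
  [forall a, xy.1 a ==> z a] &&
  [forall i : N, balance xy i ==
     (if i == orig I r then 1 else if i == dest I r then -1 else 0)].

Definition route_cost (r : T) (xy : routeT) : R :=
  \sum_(a : Hb * Hb) tau I r a.1 a.2 * (xy.1 a)%:R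
  + \sum_(b : N * N) gamma I r b.1 b.2 * (xy.2 b)%:R.

Definition route_time (xy : routeT) : R :=
  \sum_(a : Hb * Hb) (tbus I a.1 a.2 + twait I a.1 a.2) * (xy.1 a)%:R
  + \sum_(b : N * N) tshut I b.1 b.2 * (xy.2 b)%:R.

Definition lex_le (r : T) (xy xy' : routeT) : bool :=
  (route_cost r xy < route_cost r xy') ||
  ((route_cost r xy == route_cost r xy') && (route_time xy <= route_time xy')).

Definition lex_opt_route (r : T) (z : designT) (xy : routeT) : bool :=
  is_route r z xy && [forall xy' : routeT, is_route r z xy' ==> lex_le r xy xy'].

(* g^r(z): the cost of the route of r under z (all lexicographic optima have
   the same cost; convention 0 if r has no route at all under z). *)
Definition opt_cost (r : T) (z : designT) : R :=
  match [pick xy | lex_opt_route r z xy] with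
  | Some xy => route_cost r xy
  | None => 0
  end.

Definition dfd_obj (That : {set T}) (z : designT) : R :=
  \sum_(a : Hb * Hb) beta I a.1 a.2 * (z a)%:R
  + \sum_(r in That) riders I r * opt_cost r z.

Definition dfd_optimal (That : {set T}) (z : designT) : Prop :=
  is_design z /\ forall z' : designT, is_design z' -> dfd_obj That z <= dfd_obj That z'.

End ODMTS.

From HB Require Import structures.
From mathcomp Require Import all_boot all_order all_algebra.
Import Order.TTheory GRing.Theory Num.Theory.
Local Open Scope ring_scope.

(* The classical exchange argument: the objective of ODMTS-DFD(T2) is that of
   ODMTS-DFD(T1) plus the weighted costs D of the extra trips T2 \ T1.  Adding
   the optimality inequalities F1(z1) <= F1(z2) and F1(z2) + D(z2) <=
   F1(z1) + D(z1) yields D(z2) <= D(z1).  No sign condition on the riders is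
   needed. *)

Lemma le_increment_of_minimizers {R : numDomainType} {X : Type} (f g : X -> R)
    (x1 x2 : X) :
  f x1 <= f x2 -> f x2 + g x2 <= f x1 + g x1 -> g x2 <= g x1.
Proof.
move=> le_f le_fg; rewrite -(lerD2l (f x2)).
by apply: (le_trans le_fg); rewrite lerD2r.
Qed.

Section DFDObjective.
Context {R : realDomainType} {N T : finType} (I : odmts R N T).

Definition trips_cost (That : {set T}) (z : designT I) : R :=
  \sum_(r in That) riders I r * opt_cost r z.

Lemma dfd_obj_subset (T1 T2 : {set T}) (z : designT I) :
  T1 \subset T2 -> dfd_obj T2 z = dfd_obj T1 z + trips_cost (T2 :\: T1) z.
Proof.
move=> sT12; rewrite /dfd_obj /trips_cost -addrA; congr (_ + _).
by rewrite (big_setID T1) /= (setIidPr sT12).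
Qed.

Lemma trips_cost_le_of_optimal (T1 T2 : {set T}) (z1 z2 : designT I) :
    T1 \subset T2 -> dfd_optimal T1 z1 -> dfd_optimal T2 z2 ->
  trips_cost (T2 :\: T1) z2 <= trips_cost (T2 :\: T1) z1.
Proof.
move=> sT12 [dz1 opt1] [dz2 opt2].
apply: (le_increment_of_minimizers (dfd_obj T1)); first exact: opt1.
by rewrite -!dfd_obj_subset //; apply: opt2.
Qed.

End DFDObjective.

Theorem mainTheorem3 (R : realDomainType) (N T : finType) (I : odmts R N T)
  (hp : forall r : T, 0 <= riders I r)
  (T1 T2 : {set T}) (hT12 : T1 \subset T2)
  (z1 z2 : designT I)
  (hz1 : dfd_optimal T1 z1) (hz2 : dfd_optimal T2 z2) :
  \sum_(r in T2 :\: T1) riders I r * (opt_cost r z2 - opt_cost r z1) <= 0.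
Proof.
under eq_bigr do rewrite mulrBr.
rewrite sumrB subr_le0.
exact: trips_cost_le_of_optimal.
Qed.
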